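(* Let $F:\mathbb{R}^p\to\mathbb{R}^p$ be single-valued and $T:\mathbb{R}^p\rightrightarrows\mathbb{R}^p$ be maximally $3$-cyclically monotone, $\Phi:=F+T$, and let $x^\star\in\mathrm{zer}\,\Phi$. Let $\kappa_1,\kappa_2\ge0$, $\beta>0$, $\eta>0$, and let $\{(x^k,y^k)\}$ be generated by: start from $x^0\in\mathrm{dom}\,\Phi$, set $x^{-1}=y^{-1}:=x^0$, and for $k\ge0$ $$y^k:=J_{\frac{\eta}{\beta}T}\big(x^k-\tfrac{\eta}{\beta}u^k\big),\qquad x^{k+1}:=J_{\eta T}\big(x^k-\eta Fy^k\big),$$ where $u^k\in\mathbb{R}^p$ satisfies $\|Fx^k-u^k\|^2\le\kappa_1\|Fx^k-Fy^{k-1}\|^2+\kappa_2\|Fx^k-Fx^{k-1}\|^2$. Then for any $\gamma>0$ and $k\ge0$, $$\begin{aligned}\|x^{k+1}-x^\star\|^2\le{}&\|x^k-x^\star\|^2-(1-\beta)\|x^{k+1}-x^k\|^2-\beta\|x^k-y^k\|^2-(\beta-\gamma)\|x^{k+1}-y^k\|^2\\&+\tfrac{\eta^2}{\gamma}\|Fy^k-u^k\|^2-2\eta\langle Fy^k-Fx^\star,y^k-x^\star\rangle.\end{aligned}$$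
   Context: $\mathrm{zer}\,\Phi:=\{x:0\in Fx+Tx\}$. $J_{\lambda T}:=(\mathbb{I}+\lambda T)^{-1}$ is the resolvent of $\lambda T$. $T$ is $3$-cyclically monotone if $\sum_{i=1}^3\langle u^i,x^i-x^{i+1}\rangle\ge0$ for all $(x^i,u^i)\in\mathrm{gra}\,T$ with $x^4=x^1$; maximally so if its graph is not properly contained in the graph of another $3$-cyclically monotone operator. *)

From HB Require Import structures.
From mathcomp Require Import all_boot all_order all_algebra.
From mathcomp Require Import reals.
Set Implicit Arguments. Unset Strict Implicit. Unset Printing Implicit Defensive.
Import Order.TTheory GRing.Theory Num.Theory.
Local Open Scope ring_scope.

Section Defs.
Variables (R : realType) (p : nat).
Local Notation V := 'rV[R]_p.

Definition dot (u v : V) : R := \sum_(i < p) u 0 i * v 0 i.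
Definition sqnorm (u : V) : R := dot u u.

(* A set-valued operator T : R^p => R^p is given by its graph:
   T x u  means  u \in T x. *)
Definition setop := V -> V -> Prop.

Definition cyc3_monotone (T : setop) : Prop :=
  forall x1 x2 x3 u1 u2 u3, T x1 u1 -> T x2 u2 -> T x3 u3 ->
    0 <= dot u1 (x1 - x2) + dot u2 (x2 - x3) + dot u3 (x3 - x1).

Definition max_cyc3_monotone (T : setop) : Prop :=
  cyc3_monotone T /\
  forall S : setop, cyc3_monotone S -> (forall x u, T x u -> S x u) ->
    forall x u, S x u -> T x u.

(* y \in J_{lam T}(z) = (I + lam T)^{-1}(z)  iff  z \in y + lam T y *)
Definition resolvent (lam : R) (T : setop) (z y : V) : Prop :=
  exists v, T y v /\ z = y + lam *: v.

(* dom (F + T) = dom T, since F is single-valued everywhere defined *)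
Definition in_dom_sum (F : V -> V) (T : setop) (x : V) : Prop :=
  exists v, T x v.

Definition in_zer_sum (F : V -> V) (T : setop) (x : V) : Prop :=
  exists v, T x v /\ F x + v = 0.

(* a^{k-1}, with a^{-1} := a0 (the paper sets x^{-1} = y^{-1} := x^0) *)
Definition prevk (a0 : V) (a : nat -> V) (k : nat) : V :=
  match k with 0 => a0 | k'.+1 => a k' end.

End Defs.

From HB Require Import structures.
From mathcomp Require Import all_boot all_order all_algebra.
From mathcomp Require Import reals.
From mathcomp Require Import ring lra.
Set Implicit Arguments. Unset Strict Implicit. Unset Printing Implicit Defensive.
Import Order.TTheory GRing.Theory Num.Theory.
Local Open Scope ring_scope.

(* Recover the graph points of T hidden in the two resolvent steps and in the
   zero x*: η⁻¹β(x - y) - u ∈ T y, η⁻¹(x - x⁺) - F y ∈ T x⁺ and -F x* ∈ T x*.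
   Applying 3-cyclic monotonicity to the cycle y → x⁺ → x* → y and scaling by η
   gives an inequality whose inner products are rewritten with the three-point
   identity 2⟨a - b, b - c⟩ = ‖a - c‖² - ‖a - b‖² - ‖b - c‖² (twice), while the
   error term η⟨F y - u, y - x⁺⟩ is absorbed by Young's inequality with weight γ. *)

Section InnerProduct.
Variables (R : realType) (p : nat).
Local Notation V := 'rV[R]_p.
Implicit Types (u v w : V) (a : R).

Lemma dotC u v : dot u v = dot v u.
Proof. by apply: eq_bigr => i _; rewrite mulrC. Qed.

Lemma dotDl u v w : dot (u + v) w = dot u w + dot v w.
Proof. by rewrite /dot -big_split; apply: eq_bigr => i _; rewrite mxE mulrDl. Qed.

Lemma dotNl u v : dot (- u) v = - dot u v.
Proof. by rewrite /dot -sumrN; apply: eq_bigr => i _; rewrite mxE mulNr. Qed.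

Lemma dotZl a u v : dot (a *: u) v = a * dot u v.
Proof. by rewrite /dot mulr_sumr; apply: eq_bigr => i _; rewrite mxE mulrA. Qed.

Lemma dotBl u v w : dot (u - v) w = dot u w - dot v w.
Proof. by rewrite dotDl dotNl. Qed.

Lemma dotNr u v : dot u (- v) = - dot u v.
Proof. by rewrite dotC dotNl dotC. Qed.

Lemma dotZr a u v : dot u (a *: v) = a * dot u v.
Proof. by rewrite dotC dotZl dotC. Qed.

Lemma dotDr u v w : dot u (v + w) = dot u v + dot u w.
Proof. by rewrite dotC dotDl !(dotC u). Qed.

Lemma dotBr u v w : dot u (v - w) = dot u v - dot u w.
Proof. by rewrite dotC dotBl !(dotC u). Qed.

Lemma sqnorm_ge0 u : 0 <= sqnorm u.
Proof. by apply: sumr_ge0 => i _; apply: sqr_ge0. Qed.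

Lemma sqnormN u : sqnorm (- u) = sqnorm u.
Proof. by rewrite /sqnorm dotNl dotNr opprK. Qed.

Lemma sqnormBC u v : sqnorm (u - v) = sqnorm (v - u).
Proof. by rewrite -opprB sqnormN. Qed.

Lemma sqnormZ a u : sqnorm (a *: u) = a ^+ 2 * sqnorm u.
Proof. by rewrite /sqnorm dotZl dotZr mulrA expr2. Qed.

Lemma sqnormD u v : sqnorm (u + v) = sqnorm u + 2 * dot u v + sqnorm v.
Proof. by rewrite /sqnorm dotDl !dotDr (dotC v u); ring. Qed.

Lemma sqnormB u v : sqnorm (u - v) = sqnorm u - 2 * dot u v + sqnorm v.
Proof. by rewrite sqnormD dotNr sqnormN mulrN. Qed.

Lemma dot_three_point u v w :
  2 * dot (u - v) (v - w) = sqnorm (u - w) - sqnorm (u - v) - sqnorm (v - w).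
Proof.
have -> : u - w = (u - v) + (v - w) by rewrite addrA subrK.
by rewrite sqnormD; ring.
Qed.

Lemma dot_le_young (gamma : R) u v : 0 < gamma ->
  2 * dot u v <= gamma^-1 * sqnorm u + gamma * sqnorm v.
Proof.
move=> gamma_gt0; rewrite -subr_ge0.
have -> : gamma^-1 * sqnorm u + gamma * sqnorm v - 2 * dot u v
          = gamma^-1 * sqnorm (u - gamma *: v).
  by rewrite sqnormB sqnormZ dotZr; field; rewrite gt_eqF.
by rewrite mulr_ge0 ?sqnorm_ge0 // invr_ge0 ltW.
Qed.

End InnerProduct.

Section ResolventStep.
Variables (R : realType) (p : nat) (T : setop R p).
Local Notation V := 'rV[R]_p.

Lemma resolvent_graph (lam : R) (z y : V) :
  lam != 0 -> resolvent lam T z y -> T y (lam^-1 *: (z - y)).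
Proof.
by move=> lam_neq0 [v [Tyv ->]]; rewrite (addrC y) addrK scalerA mulVf // scale1r.
Qed.

Lemma zer_sum_graph (F : V -> V) (xs : V) : in_zer_sum F T xs -> T xs (- F xs).
Proof. by move=> [v [Tv /eqP]]; rewrite addrC addr_eq0 => /eqP <-. Qed.

Hypothesis T_cyc3 : cyc3_monotone T.
Variables (F : V -> V) (beta eta : R) (x y x1 xs u : V).
Hypotheses (beta_gt0 : 0 < beta) (eta_gt0 : 0 < eta).
Hypothesis resolvent_y : resolvent (eta / beta) T (x - (eta / beta) *: u) y.
Hypothesis resolvent_x1 : resolvent eta T (x - eta *: F y) x1.
Hypothesis zer_xs : in_zer_sum F T xs.

Lemma extragradient_cyc3_ineq :
  0 <= beta * dot (x - y) (y - x1) + dot (x - x1) (x1 - xs)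
       + eta * dot (F y - u) (y - x1) - eta * dot (F y - F xs) (y - xs).
Proof.
have beta_neq0 : beta != 0 by rewrite gt_eqF.
have eta_neq0 : eta != 0 by rewrite gt_eqF.
have Ty := resolvent_graph (mulf_neq0 eta_neq0 (invr_neq0 beta_neq0)) resolvent_y.
have Tx1 := resolvent_graph eta_neq0 resolvent_x1.
have := T_cyc3 Ty Tx1 (zer_sum_graph zer_xs).
set cyc := (X in 0 <= X) => cyc_ge0.
suff -> : beta * dot (x - y) (y - x1) + dot (x - x1) (x1 - xs)
          + eta * dot (F y - u) (y - x1) - eta * dot (F y - F xs) (y - xs)
          = eta * cyc by rewrite mulr_ge0 // ltW.
by rewrite /cyc !dotZl !dotBl !dotNl !dotBr !dotZl; field; rewrite eta_neq0.
Qed.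

Lemma extragradient_step_estimate (gamma : R) : 0 < gamma ->
  sqnorm (x1 - xs) <=
    sqnorm (x - xs)
    - (1 - beta) * sqnorm (x1 - x)
    - beta * sqnorm (x - y)
    - (beta - gamma) * sqnorm (x1 - y)
    + eta ^+ 2 / gamma * sqnorm (F y - u)
    - 2 * eta * dot (F y - F xs) (y - xs).
Proof.
move=> gamma_gt0.
have mono := extragradient_cyc3_ineq.
have three_x := dot_three_point x x1 xs.
have three_y : beta * (2 * dot (x - y) (y - x1))
               = beta * (sqnorm (x - x1) - sqnorm (x - y) - sqnorm (y - x1)).
  by rewrite dot_three_point.
have := dot_le_young (eta *: (F y - u)) (y - x1) gamma_gt0.
rewrite dotZl sqnormZ => young.
rewrite (sqnormBC x1 x) (sqnormBC x1 y).
lra.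
Qed.

End ResolventStep.

Theorem lemma4 (R : realType) (p : nat)
  (F : 'rV[R]_p -> 'rV[R]_p) (T : 'rV[R]_p -> 'rV[R]_p -> Prop)
  (xstar : 'rV[R]_p) (kappa1 kappa2 beta eta : R)
  (x y u : nat -> 'rV[R]_p) :
  max_cyc3_monotone T ->
  in_zer_sum F T xstar ->
  0 <= kappa1 -> 0 <= kappa2 -> 0 < beta -> 0 < eta ->
  in_dom_sum F T (x 0%N) ->
  (forall k, sqnorm (F (x k) - u k) <=
       kappa1 * sqnorm (F (x k) - F (prevk (x 0%N) y k))
     + kappa2 * sqnorm (F (x k) - F (prevk (x 0%N) x k))) ->
  (forall k, resolvent (eta / beta) T (x k - (eta / beta) *: u k) (y k)) ->
  (forall k, resolvent eta T (x k - eta *: F (y k)) (x k.+1)) ->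
  forall (gamma : R) (k : nat), 0 < gamma ->
    sqnorm (x k.+1 - xstar) <=
      sqnorm (x k - xstar)
      - (1 - beta) * sqnorm (x k.+1 - x k)
      - beta * sqnorm (x k - y k)
      - (beta - gamma) * sqnorm (x k.+1 - y k)
      + eta ^+ 2 / gamma * sqnorm (F (y k) - u k)
      - 2 * eta * dot (F (y k) - F xstar) (y k - xstar).
Proof.
move=> [T_cyc3 _] zer_xstar _ _ beta_gt0 eta_gt0 _ _ resolvent_y resolvent_x gamma k.
exact: (extragradient_step_estimate T_cyc3 beta_gt0 eta_gt0
         (resolvent_y k) (resolvent_x k) zer_xstar).
Qed.
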